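(* For every integer $D\ge 1$ there exists $n_0$ such that for all $n\ge n_0$ the following holds. If $\Gamma$ is a graph that contains as a subgraph every $D$-degenerate graph on $n$ vertices with maximum degree at most $2D+1$, then \[e(\Gamma)\ge \tfrac{1}{1000D}\,n^{2-1/D}.\]
   Context: A graph $H$ is $D$-degenerate if every induced subgraph of $H$ has a vertex of degree at most $D$; equivalently, there is an ordering $v_1,\dots,v_n$ of $V(H)$ such that each $v_i$ has at most $D$ neighbours among $v_1,\dots,v_{i-1}$. $e(\Gamma)$ denotes the number of edges of $\Gamma$. *)

From mathcomp Require Import all_boot.
From Stdlib Require Import Reals.
Set Implicit Arguments. Unset Strict Implicit. Unset Printing Implicit Defensive.

Definition simple_graph (T : finType) (g : rel T) : Prop :=
  (forall x, ~~ g x x) /\ (forall x y, g x y = g y x).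

Definition num_edges (T : finType) (g : rel T) : nat :=
  #|[set E : {set T} | [exists x, exists y, (E == [set x; y]) && g x y]]|.

Definition degenerate (T : finType) (g : rel T) (D : nat) : Prop :=
  forall S : {set T}, S != set0 ->
    exists2 v, v \in S & #|[set u in S | g v u]| <= D.

Definition max_deg_le (T : finType) (g : rel T) (d : nat) : Prop :=
  forall v, #|[set u | g v u]| <= d.

Definition contains_subgraph (T U : finType) (g : rel T) (h : rel U) : Prop :=
  exists f : U -> T, injective f /\ forall x y, h x y -> g (f x) (f y).

(* Call an adjacency structure on [0, n) admissible if every vertex has at most
   D earlier and at most D + 1 later neighbours, and every vertex except 0 has an
   earlier neighbour; such graphs are D-degenerate with maximum degree at most
   2D + 1.  Adding the vertices one at a time, vertex k may be joined to any
   min(D, a) of the a >= k / (D + 1) earlier vertices that still have at most D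
   later neighbours, so there are at least ((n - 1)!)^D / (2D(D + 1))^(D(n - 1))
   admissible graphs.  If all of them embed in a graph G, each one is recovered
   from the set of its at most Dn image edges together with the embedding, an
   injection into the at most n endpoints of these edges; hence there are at most
   n! * sum_(i <= Dn) C(e(G), i) of them.  With a^a <= 3^a a! the two bounds are
   incompatible when e(G) < n^(2 - 1/D) / (1000 D) and n > (1000 D^2)^D, D >= 2.
   For D = 1 it suffices that admissible graphs have no isolated vertex, so
   e(G) >= n / 2. *)

From mathcomp Require Import all_boot.
From Stdlib Require Import Reals Lra.
(* Reals rebinds [^] on nat to [Nat.pow]; importing ssrnat again restores [expn]. *)
From mathcomp Require Import ssrnat zify.
Set Implicit Arguments. Unset Strict Implicit. Unset Printing Implicit Defensive.

(** * Counting estimates *)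

Lemma leq_wexp2r m n e : m <= n -> m ^ e <= n ^ e.
Proof. by case: e => [|e] // le_mn; rewrite leq_exp2r. Qed.

Lemma INR_muln a b : INR (a * b) = (INR a * INR b)%R.
Proof. by rewrite mulnE mult_INR. Qed.

Lemma INR_expn a b : INR (a ^ b) = (INR a ^ b)%R.
Proof. by elim: b => [|b IH] //; rewrite expnS INR_muln IH. Qed.

Lemma succ_expn_le a : a.+1 ^ a <= 3 * a ^ a.
Proof.
case: a => [|a] //; apply/leP/INR_le.
rewrite INR_muln !INR_expn.
have a_gt0 : (0 < INR a.+1)%R by apply/lt_0_INR/ltP.
have -> : INR a.+2 = (INR a.+1 * (1 + / INR a.+1))%R.
  by rewrite (S_INR a.+1); field; lra.
set x := INR a.+1 in a_gt0 *.
rewrite Rpow_mult_distr Rmult_comm; apply: Rmult_le_compat_r; first by apply: pow_le; lra.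
have -> : INR 3 = 3%R by rewrite /=; lra.
(* (1 + 1/x)^x <= exp(1/x)^x = e <= 3 *)
apply: (Rle_trans _ (exp 1)); last exact: exp_le_3.
have -> : exp 1 = (exp (/ x) ^ a.+1)%R.
  rewrite -Rpower_pow; last exact: exp_pos.
  by rewrite /Rpower ln_exp -/x Rinv_r //; lra.
apply: pow_incr; split; last exact: exp_ineq1_le.
by have := Rinv_0_lt_compat _ a_gt0; lra.
Qed.

Lemma expnn_le_fact a : a ^ a <= 3 ^ a * a`!.
Proof.
elim: a => [|a IH] //; rewrite factS expnS.
apply: leq_trans (_ : a.+1 * (3 * a ^ a) <= _); first by rewrite leq_mul2l succ_expn_le orbT.
by rewrite expnS mulnCA -mulnA leq_mul2l [_ * (a.+1 * _)]mulnCA leq_mul2l IH !orbT.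
Qed.

Lemma ffact_le_expn n m : n ^_ m <= n ^ m.
Proof.
rewrite ffact_prod; apply: (@leq_trans (\prod_(i < m) n)).
  by apply: leq_prod => i _; apply: leq_subr.
by rewrite prod_nat_const card_ord.
Qed.

Lemma expn_le_ffact n m : (n - m) ^ m <= n ^_ m.
Proof.
rewrite ffact_prod; apply: (@leq_trans (\prod_(i < m) (n - m))).
  by rewrite prod_nat_const card_ord.
by apply: leq_prod => i _; apply/leq_sub2l/ltnW.
Qed.

Lemma fact_le_expnn n : n`! <= n ^ n.
Proof. by rewrite -ffactnn ffact_le_expn. Qed.

Lemma leq_ffactl a b k : a <= b -> a ^_ k <= b ^_ k.
Proof. by move=> le_ab; rewrite !ffact_prod; apply: leq_prod => i _; apply: leq_sub2r. Qed.

Lemma sum_binomial_le m K : K`! * \sum_(i < K.+1) 'C(m, i) <= (m + K) ^ K.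
Proof.
rewrite addnC expnDn big_distrr /=; apply: leq_sum => i _.
have le_iK : i <= K by rewrite -ltnS.
rewrite -(bin_fact le_iK) -mulnA leq_mul2l; apply/orP; right.
rewrite mulnAC [i`! * _]mulnC bin_ffact mulnC leq_mul ?ffact_le_expn //.
by rewrite (leq_trans (fact_le_expnn _)) // leq_wexp2r ?leq_subr.
Qed.

Lemma binomial_min_lb D k x : 0 < D -> k <= D.+1 * x ->
  k ^ D <= (2 * D * D.+1) ^ D * 'C(x, minn D x).
Proof.
move=> D_gt0 le_kx; have [le_2Dx|lt_x2D] := leqP (2 * D) x; last first.
  rewrite (leq_trans _ (leq_pmulr _ _)) ?bin_gt0 ?geq_minr //.
  by rewrite leq_exp2r //; nia.
have -> : minn D x = D by apply/minn_idPl; lia.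
(* k <= (D + 1) x <= 2 (D + 1) (x - D) and (x - D)^D <= x^_D <= D^D 'C(x, D) *)
apply: (@leq_trans ((2 * D.+1 * (x - D)) ^ D)); first by rewrite leq_exp2r //; nia.
rewrite -mulnA mulnAC !expnMn -!mulnA; do 2 apply: leq_mul => //.
rewrite (leq_trans (expn_le_ffact x D)) // -bin_ffact [D ^ D * _]mulnC.
by rewrite leq_mul2l fact_le_expnn orbT.
Qed.

Lemma poly_lt_geometric b D n Y : 1 < b -> 0 < D -> 0 < Y ->
  n ^ D * Y ^ n < (b ^ D * Y) ^ n.
Proof.
move=> b_gt1 D_gt0 Y_gt0; rewrite expnMn ltn_pmul2r ?expn_gt0 ?Y_gt0 //.
by rewrite -expnM mulnC expnM ltn_exp2r // ltn_expl.
Qed.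

Lemma count_bounds_expn Q D n m F : 0 < n ->
  (n.-1)`! ^ D <= F * Q ^ (D * n) -> F <= n`! * \sum_(i < (D * n).+1) 'C(m, i) ->
  ((n * (D * n)) ^ D) ^ n <= n ^ D * (9 ^ D * Q ^ D * n * (m + D * n) ^ D) ^ n.
Proof.
move=> n_gt0 F_lb F_ub; set K := D * n in F_lb F_ub *.
have fact_prod_ub : (n.-1)`! ^ D * K`! <= n ^ n * (m + K) ^ K * Q ^ K.
  apply: leq_trans (_ : F * Q ^ K * K`! <= _); first by rewrite leq_mul2r F_lb orbT.
  rewrite mulnAC leq_mul2r; apply/orP; right.
  apply: leq_trans (_ : n`! * (\sum_(i < K.+1) 'C(m, i)) * K`! <= _).
    by rewrite leq_mul2r F_ub orbT.
  rewrite -mulnA [_ * K`!]mulnC leq_mul ?fact_le_expnn ?sum_binomial_le //.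
have nK_ub : n ^ K <= 3 ^ K * n ^ D * (n.-1)`! ^ D.
  rewrite /K mulnC !expnM -!expnMn leq_wexp2r // (leq_trans (expnn_le_fact n)) //.
  by rewrite -mulnA; case: (n) n_gt0 => [|n0] // _; rewrite factS.
have KK_ub : K ^ K <= 3 ^ K * K`! := expnn_le_fact K.
have -> : ((n * K) ^ D) ^ n = n ^ K * K ^ K by rewrite -expnM expnMn.
have -> : n ^ D * (9 ^ D * Q ^ D * n * (m + K) ^ D) ^ n =
          3 ^ K * 3 ^ K * n ^ D * (n ^ n * (m + K) ^ K * Q ^ K).
  by rewrite !expnMn -!expnM -/K -[9]/(3 * 3) expnMn; lia.
apply: leq_trans (leq_mul nK_ub KK_ub) _.
have -> : 3 ^ K * n ^ D * (n.-1)`! ^ D * (3 ^ K * K`!) =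
          3 ^ K * 3 ^ K * n ^ D * ((n.-1)`! ^ D * K`!) by lia.
by rewrite leq_mul2l fact_prod_ub orbT.
Qed.

Lemma expn_addn_le a b k : (a + b) ^ k <= 2 ^ k * (a ^ k + b ^ k).
Proof.
wlog le_ab : a b / a <= b.
  by move=> hwlog; have [/hwlog //|/ltnW/hwlog] := leqP a b; rewrite addnC [b ^ k + _]addnC.
apply: (@leq_trans ((2 * b) ^ k)); first by rewrite leq_wexp2r // mul2n -addnn leq_add2r.
by rewrite expnMn leq_mul2l leq_addl orbT.
Qed.

Lemma sparse_degree_bound c D n m : 1 < D -> (c * D ^ 2) ^ D < n ->
  (c * D * m) ^ D <= n ^ (2 * D - 1) -> n * (c * D * (m + D * n)) ^ D <= (4 * n ^ 2) ^ D.
Proof.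
move=> D_gt1 n_lb m_ub.
have Dn_ub : (c * D * (D * n)) ^ D <= n ^ (2 * D - 1).
  have -> : c * D * (D * n) = c * D ^ 2 * n by lia.
  apply: (@leq_trans (n ^ D.+1)); last by rewrite leq_pexp2l; lia.
  by rewrite expnMn [n ^ D.+1]expnS leq_mul2r ltnW ?orbT.
apply: (@leq_trans (n * (2 ^ D * (2 * n ^ (2 * D - 1))))).
  apply: leq_mul => //; rewrite mulnDr (leq_trans (expn_addn_le _ _ _)) //.
  by rewrite leq_mul2l mul2n -addnn leq_add ?orbT.
have -> : (4 * n ^ 2) ^ D = 2 ^ D * 2 ^ D * (n * n ^ (2 * D - 1)).
  by rewrite -expnS -expnMn expnMn -expnM; congr (_ * _ ^ _); lia.
rewrite mulnCA -mulnA leq_mul // [n * _]mulnCA leq_mul //.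
by rewrite -{1}(expn1 2) leq_pexp2l // ltnW.
Qed.

(* 648 = 9 * 72: the counting bounds compare (c D^2 n^2)^(Dn) with
   n^D (72 D (D + 1) n^2)^(Dn), and the extra 9 absorbs n^D (see [poly_lt_geometric]). *)
Lemma counting_contradiction c D n m F : 648 * D.+1 <= c * D -> 1 < D ->
  (c * D ^ 2) ^ D < n -> (c * D * m) ^ D <= n ^ (2 * D - 1) ->
  (n.-1)`! ^ D <= F * (2 * D * D.+1) ^ (D * n) ->
  F <= n`! * \sum_(i < (D * n).+1) 'C(m, i) -> False.
Proof.
move=> c_lb D_gt1 n_lb m_ub F_lb F_ub; set Q := 2 * D * D.+1 in F_lb.
have n_gt0 : 0 < n by apply: leq_trans n_lb.
have count_ub := count_bounds_expn n_gt0 F_lb F_ub.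
have deg_ub := sparse_degree_bound D_gt1 n_lb m_ub.
set Y := (9 * Q * (4 * n ^ 2)) ^ D.
have : ((c * D * (n * (D * n))) ^ D) ^ n <= n ^ D * Y ^ n.
  rewrite 2!expnMn; apply: leq_trans (leq_mul (leqnn _) count_ub) _.
  rewrite mulnCA -expnMn leq_mul2l leq_wexp2r ?orbT //.
  have -> : (c * D) ^ D * (9 ^ D * Q ^ D * n * (m + D * n) ^ D) =
            9 ^ D * Q ^ D * (n * (c * D * (m + D * n)) ^ D).
    by rewrite [(c * D * _) ^ D]expnMn; lia.
  have -> : Y = 9 ^ D * Q ^ D * (4 * n ^ 2) ^ D by rewrite /Y 2!expnMn.
  by rewrite leq_mul2l deg_ub orbT.
apply/negP; rewrite -ltnNge.
apply: leq_trans (@poly_lt_geometric 9 D n Y _ _ _) _ => //.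
- exact: ltnW.
- by rewrite /Y expn_gt0 !muln_gt0 n_gt0 (ltnW D_gt1).
rewrite -expnMn; do 2 apply: leq_wexp2r; rewrite /Q.
have -> : 9 * (9 * (2 * D * D.+1) * (4 * n ^ 2)) = 648 * D.+1 * (D * n ^ 2) by lia.
have -> : c * D * (n * (D * n)) = c * D * (D * n ^ 2) by lia.
by rewrite leq_mul2r c_lb orbT.
Qed.

Lemma Rpower_bound_nat c D n m : 0 < c -> 0 < D -> 0 < n ->
  (INR m <= Rpower (INR n) (2 - 1 / INR D) / (INR c * INR D))%R ->
  (c * D * m) ^ D <= n ^ (2 * D - 1).
Proof.
move=> c_gt0 D_gt0 n_gt0 m_ub.
have [cR DR nR] : [/\ (0 < INR c)%R, (0 < INR D)%R & (0 < INR n)%R].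
  by split; apply/lt_0_INR/ltP.
set X := Rpower _ _ in m_ub.
have cDm_ub : (INR (c * D * m) <= X)%R.
  have cD_gt0 : (0 < INR c * INR D)%R by apply: Rmult_lt_0_compat.
  rewrite !INR_muln; apply: (Rle_trans _ (INR c * INR D * (X / (INR c * INR D)))).
    exact: Rmult_le_compat_l (Rlt_le _ _ cD_gt0) m_ub.
  by right; field; lra.
have X_pow : (X ^ D = INR n ^ (2 * D - 1))%R.
  have expD : ((2 - 1 / INR D) * INR D = INR (2 * D - 1))%R.
    rewrite minus_INR ?INR_muln /=; [field; lra | lia].
  have X_gt0 : (0 < X)%R by apply: exp_pos.
  by rewrite -(Rpower_pow D _ X_gt0) /X Rpower_mult expD Rpower_pow.
apply/leP/INR_le; rewrite !INR_expn -X_pow.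
by apply: pow_incr; split; [exact: pos_INR | exact: cDm_ub].
Qed.

(** * Counting finite sets *)

Lemma card_dep_pairs (T1 T2 : finType) (P : pred T1) (Q : T1 -> pred T2) :
  #|[set p : T1 * T2 | P p.1 && Q p.1 p.2]| = \sum_(x | P x) #|Q x|.
Proof.
rewrite -sum1_card; under eq_bigl do rewrite inE.
by rewrite -(pair_big_dep P Q (fun _ _ => 1)); apply: eq_bigr => x _; rewrite sum1_card.
Qed.

Lemma card_ord_lt n k : k <= n -> #|[set u : 'I_n | u < k]| = k.
Proof.
move=> le_kn; have widen_inj : injective (widen_ord le_kn) by move=> i j [] /val_inj.
rewrite -[RHS]card_ord -(card_imset _ widen_inj).
apply: eq_card => u; rewrite inE; apply/idP/imsetP => [lt_uk|[i _ ->]].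
  by exists (Ordinal lt_uk) => //; apply: val_inj.
exact: (ltn_ord i).
Qed.

Lemma card_small_subsets (T : finType) (S : {set T}) K :
  #|[set E : {set T} | (E \subset S) && (#|E| <= K)]| = \sum_(i < K.+1) 'C(#|S|, i).
Proof.
rewrite -sum1_card (partition_big (fun E : {set T} => inord #|E| : 'I_K.+1) predT) //=.
apply: eq_bigr => i _; rewrite -cards_draws -sum1_card; apply: eq_bigl => E; rewrite !inE.
have [sub_ES|] //= := boolP (E \subset S).
apply/andP/eqP => [[le_EK /eqP <-]|card_E]; first by rewrite inordK.
have le_EK : #|E| <= K by rewrite card_E -ltnS.
by split=> //; apply/eqP/val_inj; rewrite /= inordK.
Qed.

Lemma set2_inj (T : finType) (a b c d : T) :
  [set a; b] = [set c; d] -> (a = c /\ b = d) \/ (a = d /\ b = c).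
Proof.
move=> eq_ab_cd.
have a_cd : a \in [set c; d] by rewrite -eq_ab_cd set21.
have b_cd : b \in [set c; d] by rewrite -eq_ab_cd set22.
have c_ab : c \in [set a; b] by rewrite eq_ab_cd set21.
have d_ab : d \in [set a; b] by rewrite eq_ab_cd set22.
case/set2P: a_cd; case/set2P: b_cd; case/set2P: c_ab; case/set2P: d_ab => *; subst;
  first [by left | by right].
Qed.

Lemma card_bigcup_le (I T : finType) (P : pred I) (F : I -> {set T}) :
  #|\bigcup_(i | P i) F i| <= \sum_(i | P i) #|F i|.
Proof.
elim/big_rec2: _ => [|i x U _ le_Ux]; first by rewrite cards0.
by rewrite (leq_trans (leq_card_setU _ _)) // leq_add2l.
Qed.

(** * Admissible graphs *)

Section Admissible.
Variables n D : nat.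
Local Notation adjacency := {ffun 'I_n -> {set 'I_n}}.
Implicit Types (A : adjacency) (k : nat).

Definition adj_rel A : rel 'I_n := fun x y => y \in A x.
Definition nbrs_below A v := [set u in A v | u < v].
Definition nbrs_above A v := [set u in A v | v < u].

(* [k] is the number of vertices placed so far: all edges lie inside [0, k). *)
Record admissible k A : Prop := Admissible {
  adm_irrefl : forall v, v \notin A v;
  adm_sym : forall u v, (v \in A u) = (u \in A v);
  adm_below : forall v, #|nbrs_below A v| <= D;
  adm_above : forall v, #|nbrs_above A v| <= D.+1;
  adm_below_gt0 : forall v : 'I_n, 0 < v < k -> 0 < #|nbrs_below A v|;
  adm_support : forall u v, v \in A u -> v < k }.

Definition admissibleb k A := [&& [forall v, v \notin A v],
  [forall u, forall v, (v \in A u) == (u \in A v)],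
  [forall v, (#|nbrs_below A v| <= D) && (#|nbrs_above A v| <= D.+1)],
  [forall v : 'I_n, (0 < v < k) ==> (0 < #|nbrs_below A v|)] &
  [forall u, forall v, (v \in A u) ==> (v < k)]].

Lemma admissibleP k A : reflect (admissible k A) (admissibleb k A).
Proof.
apply: (iffP and5P) => [[/forallP irr /forallP sym /forallP deg /forallP gt0 /forallP supp]|].
  split=> [v|u v|v|v|v|u v]; first exact: irr.
  - exact/eqP/(forallP (sym u)).
  - by case/andP: (deg v).
  - by case/andP: (deg v).
  - exact/implyP/gt0.
  - exact/implyP/(forallP (supp u)).
case=> irr sym below above gt0 supp; split; apply/forallP => u //.
- by apply/forallP => v; rewrite sym.
- by rewrite below above.
- exact/implyP/gt0.
- by apply/forallP => v; apply/implyP/supp.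
Qed.

Definition admissible_set k := [set A | admissibleb k A].

Lemma admissible_simple k A : admissible k A -> simple_graph (adj_rel A).
Proof. by case=> irr sym *; split=> [x|x y]; [exact: irr | rewrite /adj_rel sym]. Qed.

Lemma admissible_degenerate k A : admissible k A -> degenerate (adj_rel A) D.
Proof.
move=> hA S /set0Pn[v0 v0S].
have [v vS v_max] := arg_maxnP (fun v : 'I_n => val v) v0S.
exists v => //; apply: leq_trans (adm_below hA v); apply: subset_leq_card.
apply/subsetP => u; rewrite !inE /adj_rel => /andP[uS uAv].
have le_uv : u <= v := v_max u uS.
rewrite uAv ltn_neqAle le_uv andbT /=.
by apply: contraNneq (adm_irrefl hA v) => /val_inj eq_uv; rewrite -{1}eq_uv.
Qed.

Lemma admissible_max_deg k A : admissible k A -> max_deg_le (adj_rel A) (2 * D + 1).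
Proof.
move=> hA v; have -> : [set u | adj_rel A v u] = nbrs_below A v :|: nbrs_above A v.
  apply/setP => u; rewrite !inE /adj_rel -andb_orr.
  case: (ltngtP u v) => [| |/val_inj ->]; rewrite ?andbT //.
  by rewrite (negbTE (adm_irrefl hA v)).
apply: leq_trans (leq_card_setU _ _) _.
by rewrite addn1 mul2n -addnn -addnS; exact: leq_add (adm_below hA v) (adm_above hA v).
Qed.

Lemma sum_card_above_below A : (forall u v, (v \in A u) = (u \in A v)) ->
  \sum_u #|nbrs_above A u| = \sum_v #|nbrs_below A v|.
Proof.
move=> sym; have card_above u : #|nbrs_above A u| = \sum_v ((v \in A u) && (u < v) : nat).
  by rewrite -sum1_card big_mkcond; apply: eq_bigr => v _; rewrite inE.
have card_below v : #|nbrs_below A v| = \sum_u ((u \in A v) && (u < v) : nat).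
  by rewrite -sum1_card big_mkcond; apply: eq_bigr => u _; rewrite inE.
under eq_bigr do rewrite card_above; under [RHS]eq_bigr do rewrite card_below.
by rewrite exchange_big; apply: eq_bigr => v _; apply: eq_bigr => u _; rewrite sym.
Qed.

Lemma admissible_nil k A (v : 'I_n) : admissible k A -> k <= v -> A v = set0.
Proof.
move=> hA le_kv; apply/setP => u; rewrite inE; apply/negbTE/negP.
by rewrite (adm_sym hA) => /(adm_support hA); rewrite ltnNge le_kv.
Qed.

Definition avail k A := [set u : 'I_n | (u < k) && (#|nbrs_above A u| <= D)].

Lemma card_avail_lb k A : admissible k A -> k <= n -> k <= D.+1 * #|avail k A|.
Proof.
(* The at most D k edges inside [0, k) leave at most D k / (D + 1) vertices with
   D + 1 later neighbours. *)
move=> hA le_kn; set L := [set u : 'I_n | u < k]; set Sat := L :\: avail k A.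
have below_ub : \sum_v #|nbrs_below A v| <= D * k.
  rewrite -(card_ord_lt le_kn) -/L mulnC -sum_nat_const (bigID (mem L)) /=.
  rewrite [X in _ + X]big1 ?addn0 => [|v]; first by apply: leq_sum => v _; apply: adm_below hA v.
  rewrite inE -leqNgt => /(admissible_nil hA) Av0.
  by apply/eqP; rewrite cards_eq0 -subset0; apply/subsetP => u; rewrite inE Av0 inE.
have above_lb : D.+1 * #|Sat| <= \sum_u #|nbrs_above A u|.
  rewrite mulnC -sum_nat_const [X in _ <= X](bigID (mem Sat)) /=; apply: leq_trans (leq_addr _ _).
  by apply: leq_sum => u; rewrite !inE => /andP[+ lt_uk]; rewrite lt_uk -ltnNge.
have card_split : #|avail k A| + #|Sat| = k.
  have avail_sub : avail k A \subset L by apply/subsetP => u; rewrite !inE => /andP[].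
  by rewrite -[RHS](card_ord_lt le_kn) -/L -(cardsID (avail k A) L) (setIidPr avail_sub).
have := congr1 (muln D) card_split.
by move: above_lb; rewrite (sum_card_above_below (adm_sym hA)); lia.
Qed.

Definition extend (w : 'I_n) A (S : {set 'I_n}) : adjacency :=
  [ffun v => if v == w then S else if v \in S then w |: A v else A v].

Section Extend.
Variables (w : 'I_n) (A : adjacency) (S : {set 'I_n}).
Hypotheses (hA : admissible w A) (hS : S \subset avail w A).

Let S_lt u : u \in S -> u < w.
Proof. by move/(subsetP hS); rewrite inE => /andP[]. Qed.

Let w_notin_S : w \notin S.
Proof. by apply/negP => /S_lt; rewrite ltnn. Qed.

Let A_w : A w = set0.
Proof. exact: admissible_nil hA (leqnn w). Qed.

Lemma extend_mem u v : (u \in extend w A S v) =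
  [|| (v == w) && (u \in S), (u == w) && (v \in S) | u \in A v].
Proof.
rewrite ffunE; have [->|ne_vw] := eqVneq v w => /=.
  by rewrite A_w inE (negbTE w_notin_S) andbF !orbF.
by case: ifP => vS; rewrite ?inE ?andbT ?andbF.
Qed.

Lemma extend_below v : nbrs_below (extend w A S) v = if v == w then S else nbrs_below A v.
Proof.
apply/setP => u; rewrite !inE extend_mem.
have [->|ne_vw] := eqVneq v w; rewrite /= ?A_w ?inE ?(negbTE w_notin_S) ?andbF ?orbF.
  by apply/andb_idr/S_lt.
case: (eqVneq u w) => [->|] //=; case: (boolP (v \in S)) => //= /S_lt/ltnW le_vw.
by rewrite ltnNge le_vw andbF.
Qed.

Lemma extend_above v :
  nbrs_above (extend w A S) v = if v \in S then w |: nbrs_above A v else nbrs_above A v.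
Proof.
apply/setP => u; have [->|ne_vw] := eqVneq v w.
  rewrite (negbTE w_notin_S) !inE extend_mem eqxx A_w (negbTE w_notin_S) !inE andbF !orbF /=.
  by apply/negbTE/negP => /andP[/S_lt lt_uw /(ltn_trans lt_uw)]; rewrite ltnn.
case: ifP => vS; rewrite !inE extend_mem (negbTE ne_vw) vS /= ?andbF //.
by case: (eqVneq u w) => [->|] //=; rewrite S_lt.
Qed.

Lemma extend_admissible : 0 < D -> 0 < w -> #|S| = minn D #|avail w A| ->
  admissible w.+1 (extend w A S).
Proof.
move=> D_gt0 w_gt0 card_S.
have S_gt0 : 0 < #|S|.
  by have := card_avail_lb hA (ltnW (ltn_ord w)); rewrite card_S; nia.
split.
- move=> v; rewrite extend_mem (negbTE (adm_irrefl hA v)) orbF orbb.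
  by case: (eqVneq v w) => [->|]; rewrite ?(negbTE w_notin_S).
- move=> u v; rewrite !extend_mem (adm_sym hA).
  by case: (u == w) (v == w) (u \in S) (v \in S) => [] [] [] []; rewrite /= ?orbT.
- move=> v; rewrite extend_below; case: ifP => _; last exact: adm_below hA v.
  by rewrite card_S geq_minl.
- move=> v; rewrite extend_above; case: ifP => [/(subsetP hS)|_]; last exact: adm_above hA v.
  rewrite inE => /andP[_ above_v]; rewrite cardsU1 -add1n.
  exact: leq_add (leq_b1 _) above_v.
- move=> v /andP[v_gt0]; rewrite ltnS leq_eqVlt extend_below.
  case/orP => [/eqP/val_inj ->|lt_vw]; first by rewrite eqxx.
  have v_neq_w : v != w by rewrite -val_eqE ltn_eqF.
  by rewrite (negbTE v_neq_w) (adm_below_gt0 hA) // v_gt0.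
- move=> u v; rewrite extend_mem ltnS.
  case/or3P => [/andP[_ /S_lt/ltnW] | /andP[/eqP eq_uw _] | /(adm_support hA)/ltnW] //.
  by rewrite eq_uw.
Qed.
End Extend.

Lemma extend_inj (w : 'I_n) A1 A2 (S1 S2 : {set 'I_n}) :
  admissible w A1 -> admissible w A2 -> S1 \subset avail w A1 -> S2 \subset avail w A2 ->
  extend w A1 S1 = extend w A2 S2 -> A1 = A2 /\ S1 = S2.
Proof.
move=> hA1 hA2 hS1 hS2 eq_ext.
have eq_S : S1 = S2 by have := congr1 (fun B : adjacency => B w) eq_ext; rewrite !ffunE eqxx.
split=> //; apply/ffunP => v; apply/setP => u.
have [->|ne_vw] := eqVneq v w; first by rewrite !(admissible_nil _ (leqnn w)).
have := extend_mem hA1 hS1 u v; rewrite eq_ext (extend_mem hA2 hS2) eq_S (negbTE ne_vw) /=.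
have [->|_] := eqVneq u w; last by [].
have w_notin B : admissible w B -> w \notin B v.
  by move=> hB; apply/negP => /(adm_support hB); rewrite ltnn.
by rewrite (negbTE (w_notin _ hA1)) (negbTE (w_notin _ hA2)).
Qed.

Lemma card_admissible_set_step (w : 'I_n) : 0 < D -> 0 < w ->
  #|admissible_set w| * w ^ D <= (2 * D * D.+1) ^ D * #|admissible_set w.+1|.
Proof.
move=> D_gt0 w_gt0.
pose choices (A : adjacency) :=
  [pred S : {set 'I_n} | (S \subset avail w A) && (#|S| == minn D #|avail w A|)].
set P := [set p : adjacency * {set 'I_n} | (p.1 \in admissible_set w) && choices p.1 p.2].
have card_P : #|P| = \sum_(A in admissible_set w) 'C(#|avail w A|, minn D #|avail w A|).
  rewrite (card_dep_pairs (mem (admissible_set w)) choices); apply: eq_bigr => A _.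
  by rewrite -cards_draws; apply: eq_card => S; rewrite !inE.
have P_le : #|P| <= #|admissible_set w.+1|.
  rewrite -(@card_in_imset _ _ (fun p => extend w p.1 p.2)); last first.
    move=> [A1 S1] [A2 S2]; rewrite !inE /= => /andP[/admissibleP hA1 /andP[hS1 _]].
    case/andP=> /admissibleP hA2 /andP[hS2 _] /(extend_inj (w := w) hA1 hA2 hS1 hS2).
    by case=> -> ->.
  apply/subset_leq_card/subsetP => _ /imsetP[[A S] + ->]; rewrite !inE /=.
  case/andP=> /admissibleP hA /andP[hS /eqP card_S]; apply/admissibleP.
  exact: extend_admissible.
apply: leq_trans (_ : _ <= (2 * D * D.+1) ^ D * #|P|) _; last by rewrite leq_mul2l P_le orbT.
rewrite card_P big_distrr -sum_nat_const; apply: leq_sum => A; rewrite inE => /admissibleP hA.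
by apply: binomial_min_lb D_gt0 (card_avail_lb hA (ltnW (ltn_ord w))).
Qed.

Lemma card_admissible_set_lb j : 0 < D -> j < n ->
  j`! ^ D <= #|admissible_set j.+1| * (2 * D * D.+1) ^ (D * j).
Proof.
move=> D_gt0; elim: j => [lt0n|j IH lt_jn].
  pose A0 : adjacency := [ffun=> set0].
  have nbrs0 v : nbrs_below A0 v = set0 /\ nbrs_above A0 v = set0.
    by split; apply/setP => u; rewrite !inE ffunE inE.
  rewrite fact0 exp1n muln0 expn0 muln1 card_gt0; apply/set0Pn; exists A0.
  rewrite inE; apply/admissibleP; split=> [v|u v|v|v|v|u v]; rewrite ?ffunE ?inE //.
  - by rewrite (nbrs0 v).1 cards0.
  - by rewrite (nbrs0 v).2 cards0.
  - by case/andP => v_gt0; rewrite ltnS leqn0 => /eqP v0; rewrite v0 in v_gt0.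
have IH' := IH (ltnW lt_jn); rewrite factS expnMn mulnC.
apply: leq_trans (_ : _ <= #|admissible_set j.+1| * (2 * D * D.+1) ^ (D * j) * j.+1 ^ D) _.
  by rewrite leq_mul2r IH' orbT.
rewrite [D * j.+1]mulnS expnD mulnAC mulnA leq_mul2r [X in _ <= X]mulnC.
by rewrite (card_admissible_set_step (w := Ordinal lt_jn)) ?orbT.
Qed.

Lemma card_admissible_set_n_lb : 0 < D -> 0 < n ->
  (n.-1)`! ^ D <= #|admissible_set n| * (2 * D * D.+1) ^ (D * n).
Proof.
move=> D_gt0 n_gt0; have := card_admissible_set_lb D_gt0 (_ : n.-1 < n).
rewrite ltn_predL (prednK n_gt0) => /(_ n_gt0) /leq_trans; apply.
by rewrite leq_mul2l leq_pexp2l ?leq_mul2l ?leq_pred ?muln_gt0 ?D_gt0 ?orbT.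
Qed.

Lemma admissible_has_nbr A : admissible n A -> 1 < n -> forall x, exists y, y \in A x.
Proof.
move=> hA n_gt1 x; have [x0|x_gt0] := posnP x; last first.
  have [y] := card_gt0P (adm_below_gt0 hA (v := x) (introT andP (conj x_gt0 (ltn_ord x)))).
  by rewrite inE => /andP[y_x _]; exists y.
pose one := Ordinal n_gt1.
have [y] := card_gt0P (adm_below_gt0 hA (v := one) n_gt1).
rewrite inE (adm_sym hA) => /andP[one_y]; rewrite ltnS leqn0 => /eqP y0.
by exists one; rewrite (_ : x = y) //; apply: val_inj; rewrite /= x0 y0.
Qed.
End Admissible.

(** * Encoding the admissible graphs embedded in a graph *)

Section Encoding.
Variables (T : finType) (g : rel T) (n D : nat).
Local Notation adjacency := {ffun 'I_n -> {set 'I_n}}.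
Local Notation code := ({set {set T}} * {ffun 'I_n -> T})%type.

Definition edge_set := [set E : {set T} | [exists x, exists y, (E == [set x; y]) && g x y]].

Definition image_edges (f : 'I_n -> T) (A : adjacency) : {set {set T}} :=
  \bigcup_x [set [set f x; f y] | y in nbrs_below A x].

Definition codes := [set p : code | ((p.1 \subset edge_set) && (#|p.1| <= D * n)) &&
  [&& #|cover p.1| <= n, injectiveb p.2 & p.2 \in ffun_on (mem (cover p.1))]].

Definition decode (p : code) : adjacency := [ffun x => [set y | [set p.2 x; p.2 y] \in p.1]].

Lemma card_codes : #|codes| <= n`! * \sum_(i < (D * n).+1) 'C(#|edge_set|, i).
Proof.
pose small := [pred E : {set {set T}} | (E \subset edge_set) && (#|E| <= D * n)].
pose injections E :=
  [pred f : {ffun 'I_n -> T} | [&& #|cover E| <= n, injectiveb f & f \in ffun_on (mem (cover E))]].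
rewrite (card_dep_pairs small injections) mulnC -(card_small_subsets _ (D * n)).
rewrite (eq_card (B := small)) => [|E]; last by rewrite inE.
rewrite -sum_nat_const; apply: leq_sum => E _.
have [le_cover_n|] := boolP (#|cover E| <= n); last first.
  move=> gt_cover_n; rewrite (@eq_card _ _ pred0) ?card0 // => f.
  by rewrite inE (negbTE gt_cover_n).
apply: leq_trans (_ : #|[set f in ffun_on (mem (cover E)) | injectiveb f]| <= _).
  by apply/subset_leq_card/subsetP => f; rewrite !inE le_cover_n /= andbC.
by rewrite card_inj_ffuns_on card_ord -ffactnn leq_ffactl.
Qed.

Section Embedding.
Variables (A : adjacency) (f : 'I_n -> T).
Hypotheses (hA : admissible D n A) (f_inj : injective f).

Lemma mem_image_edges x y : ([set f x; f y] \in image_edges f A) = (y \in A x).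
Proof.
apply/bigcupP/idP => [[a _ /imsetP[b]]|y_x].
  rewrite inE => /andP[b_a _] /set2_inj[[/f_inj-> /f_inj->]|[/f_inj-> /f_inj->]] //.
  by rewrite (adm_sym hA).
have [lt_yx|lt_xy|/val_inj eq_xy] := ltngtP y x.
- by exists x => //; apply/imsetP; exists y; rewrite ?inE ?y_x.
- exists y => //; apply/imsetP; exists x; last by rewrite setUC.
  by rewrite inE -(adm_sym hA) y_x.
- by move: y_x; rewrite eq_xy (negbTE (adm_irrefl hA x)).
Qed.

Lemma decode_image_edges : decode (image_edges f A, finfun f) = A.
Proof. by apply/ffunP => x; apply/setP => y; rewrite !ffunE inE /= !ffunE mem_image_edges. Qed.

Lemma image_edges_code : 1 < n -> (forall x y, adj_rel A x y -> g (f x) (f y)) ->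
  (image_edges f A, finfun f) \in codes.
Proof.
move=> n_gt1 f_edge.
have f_cover x : f x \in cover (image_edges f A).
  have [y y_x] := admissible_has_nbr hA n_gt1 x.
  by apply/bigcupP; exists [set f x; f y]; rewrite ?mem_image_edges ?set21.
rewrite inE /=; apply/andP; split; [apply/andP; split | apply/and3P; split].
- apply/subsetP => _ /bigcupP[x _ /imsetP[y y_x ->]].
  rewrite inE; apply/existsP; exists (f x); apply/existsP; exists (f y); rewrite eqxx /=.
  by apply: f_edge; move: y_x; rewrite inE => /andP[].
- apply: leq_trans (card_bigcup_le _ _) _; rewrite mulnC -[n in n * D]card_ord -sum_nat_const.
  by apply: leq_sum => x _; exact: leq_trans (leq_imset_card _ _) (adm_below hA x).
- rewrite -[n in _ <= n]card_ord -(card_imset _ f_inj); apply/subset_leq_card/subsetP.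
  by move=> _ /bigcupP[_ /bigcupP[x _ /imsetP[y _ ->]] /set2P[]->]; apply: imset_f.
- by apply/injectiveP => x y; rewrite !ffunE => /f_inj.
- by apply/ffun_onP => x; rewrite ffunE f_cover.
Qed.
End Embedding.

Lemma card_admissible_set_le_codes : 1 < n ->
  (forall A, A \in admissible_set n D n -> contains_subgraph g (adj_rel A)) ->
  #|admissible_set n D n| <= #|codes|.
Proof.
move=> n_gt1 embed; apply: leq_trans (leq_imset_card decode codes).
apply/subset_leq_card/subsetP => A A_adm; have [f [f_inj f_edge]] := embed A A_adm.
move: A_adm; rewrite inE => /admissibleP hA; apply/imsetP.
by exists (image_edges f A, finfun f); rewrite ?image_edges_code ?decode_image_edges.
Qed.

Lemma code_num_edges_lb p : p \in codes -> n <= 2 * #|edge_set|.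
Proof.
case: p => E f; rewrite inE /= => /andP[/andP[E_sub _]].
case/and3P=> _ /injectiveP f_inj /ffun_onP f_cover.
apply: (@leq_trans #|cover E|).
  rewrite -[n in n <= _]card_ord -(card_imset _ f_inj); apply/subset_leq_card/subsetP.
  by move=> _ /imsetP[x _ ->]; apply: f_cover.
apply: leq_trans (leq_card_cover E).1 _; rewrite mulnC.
apply: (@leq_trans (\sum_(B in E) 2)).
  apply: leq_sum => B /(subsetP E_sub); rewrite inE => /existsP[x /existsP[y /andP[/eqP-> _]]].
  by rewrite cards2; case: (_ != _).
by rewrite sum_nat_const leq_mul2r subset_leq_card ?orbT.
Qed.

Lemma universal_num_edges_lb : 0 < D -> 1 < n ->
  (forall A, A \in admissible_set n D n -> contains_subgraph g (adj_rel A)) ->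
  n <= 2 * #|edge_set|.
Proof.
move=> D_gt0 n_gt1 embed.
have : 0 < #|codes|.
  apply: leq_trans (card_admissible_set_le_codes n_gt1 embed).
  have := card_admissible_set_n_lb D_gt0 (ltnW n_gt1).
  by rewrite lt0n; apply: contraTneq => ->; rewrite mul0n -ltnNge expn_gt0 fact_gt0.
by case/card_gt0P => p /code_num_edges_lb.
Qed.
End Encoding.

Theorem theorem1p2 :
  forall D : nat, (1 <= D)%N ->
  exists n0 : nat, forall n : nat, (n0 <= n)%N ->
  forall (T : finType) (g : rel T), simple_graph g ->
  (forall h : rel 'I_n, simple_graph h -> degenerate h D ->
     max_deg_le h (2 * D + 1) -> contains_subgraph g h) ->
  (INR (num_edges g) >=
     Rpower (INR n) (2 - 1 / INR D) / (1000 * INR D))%R.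
Proof.
move=> D D_gt0; exists ((1000 * D ^ 2) ^ D).+1 => n n_lb T g _ universal.
have n_gt1 : 1 < n by apply: leq_trans n_lb; rewrite ltnS expn_gt0 muln_gt0 expn_gt0 D_gt0.
have embed A : A \in admissible_set n D n -> contains_subgraph g (adj_rel A).
  rewrite inE => /admissibleP hA.
  exact: universal (admissible_simple hA) (admissible_degenerate hA) (admissible_max_deg hA).
apply: Rnot_lt_ge => few_edges.
have edges_ub : (1000 * D * num_edges g) ^ D <= n ^ (2 * D - 1).
  apply: Rpower_bound_nat => //; first exact: ltnW.
  by rewrite [INR 1000]INR_IZR_INZ; apply: Rlt_le.
(* For D = 1 the counting bounds are too weak; no isolated vertex suffices. *)
have [D1|D_gt1] : D = 1 \/ 1 < D by lia.
  move: edges_ub (universal_num_edges_lb D_gt0 n_gt1 embed).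
  by rewrite D1 muln1 !expn1 -/(num_edges g); lia.
apply: (counting_contradiction (c := 1000) _ D_gt1 n_lb edges_ub).
- by move: D_gt1; lia.
- exact: card_admissible_set_n_lb D_gt0 (ltnW n_gt1).
- exact: leq_trans (card_admissible_set_le_codes n_gt1 embed) (card_codes g n D).
Qed.
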